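(* Let $\alpha=1+\sqrt2$. Then for every integer $n\ge1$, $$\Big\lceil \alpha n-\tfrac{1}{\sqrt2}\Big\rceil-\alpha n+\tfrac{1}{\sqrt2}>\frac{\alpha-1}{4\alpha n}.$$ *)

From Stdlib Require Import Reals.
Open Scope R_scope.

(* Floor via Stdlib's Int_part (= up x - 1, the greatest integer <= x);
   ceiling defined as -floor(-x): the least integer >= x. *)
Definition Rfloor (x : R) : Z := Int_part x.
Definition Rceil (x : R) : Z := (- Rfloor (- x))%Z.

Definition alpha : R := 1 + sqrt 2.

(* Write [d] for the gap [ceil(alpha n - 1/sqrt 2) - (alpha n - 1/sqrt 2)] and
   [K := ceil(alpha n - 1/sqrt 2) - n].  Since [alpha n - 1/sqrt 2 = n + (2n - 1)/sqrt 2],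
   we get [sqrt 2 (K - d) = 2n - 1], hence [2 d^2 + 2 sqrt 2 (2n - 1) d = 2 K^2 - (2n - 1)^2].
   The right-hand side is an odd integer and the left-hand side is nonnegative, so both
   are at least 1; with [d < 1] this forces [d (4 + 2 sqrt 2) n > 1], which is the claim. *)

From Stdlib Require Import Reals Lra Lia Psatz ZArith.
Open Scope R_scope.

Lemma sqrt2_sqr : sqrt 2 * sqrt 2 = 2.
Proof. apply sqrt_sqrt; lra. Qed.

Lemma one_lt_sqrt2 : 1 < sqrt 2.
Proof. rewrite <- sqrt_1; apply sqrt_lt_1; lra. Qed.

Lemma inv_sqrt2 : / sqrt 2 = sqrt 2 / 2.
Proof. pose proof sqrt2_sqr; pose proof one_lt_sqrt2; field_simplify_eq; lra. Qed.

Lemma Rceil_spec (x : R) : x <= IZR (Rceil x) < x + 1.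
Proof.
  unfold Rceil, Rfloor; rewrite opp_IZR.
  destruct (base_Int_part (- x)); lra.
Qed.

Lemma odd_over_sqrt2_gap (K b : Z) (d : R) :
  (0 <= b)%Z -> 0 <= d -> d = IZR K - IZR (2 * b + 1) / sqrt 2 ->
  1 <= 2 * d ^ 2 + 2 * sqrt 2 * IZR (2 * b + 1) * d.
Proof.
  intros Hb Hd HdK.
  pose proof sqrt2_sqr as Hs2; pose proof one_lt_sqrt2 as Hs.
  assert (Hz_def : IZR (2 * (K * K - 2 * b * b - 2 * b) - 1)
                   = 2 * IZR K ^ 2 - IZR (2 * b + 1) ^ 2)
    by (repeat rewrite ?minus_IZR, ?mult_IZR, ?plus_IZR; ring).
  set (a := IZR (2 * b + 1)) in *.
  assert (Ha : 0 <= a) by (apply IZR_le; lia).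
  assert (HK : sqrt 2 * IZR K = sqrt 2 * d + a).
  { rewrite HdK; field; lra. }
  assert (Hz : IZR (2 * (K * K - 2 * b * b - 2 * b) - 1)
               = 2 * d ^ 2 + 2 * sqrt 2 * a * d).
  { assert (HK2 : 2 * IZR K ^ 2 = (sqrt 2 * IZR K) ^ 2)
      by (rewrite <- Hs2 at 1; ring).
    rewrite Hz_def, HK2, HK.
    replace ((sqrt 2 * d + a) ^ 2) with (sqrt 2 * sqrt 2 * d ^ 2 + 2 * sqrt 2 * a * d + a ^ 2)
      by ring.
    rewrite Hs2; ring. }
  assert (Hz0 : (0 <= 2 * (K * K - 2 * b * b - 2 * b) - 1)%Z).
  { apply le_IZR; rewrite Hz.
    assert (0 <= sqrt 2 * a * d) by (apply Rmult_le_pos; [apply Rmult_le_pos|]; lra).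
    nra. }
  (* a nonnegative odd integer is at least 1 *)
  rewrite <- Hz; apply IZR_le; lia.
Qed.

Lemma gap_lower_bound (n : nat) (d : R) :
  (1 <= n)%nat -> 0 <= d < 1 ->
  1 <= 2 * d ^ 2 + 2 * sqrt 2 * (2 * INR n - 1) * d ->
  (alpha - 1) / (4 * alpha * INR n) < d.
Proof.
  intros hn [Hd0 Hd1] Hgap.
  pose proof sqrt2_sqr as Hs2; pose proof one_lt_sqrt2 as Hs.
  assert (Hn : 1 <= INR n) by (apply (le_INR 1); exact hn).
  assert (Hlin : 1 < d * ((4 + 2 * sqrt 2) * INR n)).
  { assert (d * (4 * sqrt 2 * INR n - 2 * sqrt 2 + 2) <= d * ((4 + 2 * sqrt 2) * INR n))
      by (apply Rmult_le_compat_l; nra).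
    nra. }
  unfold alpha; apply Rmult_lt_reg_r with (4 * (1 + sqrt 2) * INR n); [nra|].
  replace ((1 + sqrt 2 - 1) / (4 * (1 + sqrt 2) * INR n) * (4 * (1 + sqrt 2) * INR n))
    with (sqrt 2) by (field; nra).
  replace (d * (4 * (1 + sqrt 2) * INR n))
    with (sqrt 2 * (d * ((4 + 2 * sqrt 2) * INR n))) by nra.
  nra.
Qed.

Theorem mainTheorem7 (n : nat) (hn : (1 <= n)%nat) :
  IZR (Rceil (alpha * INR n - 1 / sqrt 2)) - alpha * INR n + 1 / sqrt 2
    > (alpha - 1) / (4 * alpha * INR n).
Proof.
  set (m := Rceil (alpha * INR n - 1 / sqrt 2)).
  set (d := IZR m - alpha * INR n + 1 / sqrt 2).
  assert (Hd : 0 <= d < 1).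
  { pose proof (Rceil_spec (alpha * INR n - 1 / sqrt 2)); unfold d, m; lra. }
  set (N := Z.of_nat n).
  assert (HN : IZR N = INR n) by (unfold N; rewrite <- INR_IZR_INZ; reflexivity).
  assert (Hodd : IZR (2 * (N - 1) + 1) = 2 * INR n - 1)
    by (rewrite plus_IZR, mult_IZR, minus_IZR, HN; ring).
  assert (HdK : d = IZR (m - N) - IZR (2 * (N - 1) + 1) / sqrt 2).
  { rewrite Hodd, minus_IZR, HN; unfold d, alpha, Rdiv; rewrite inv_sqrt2; field. }
  pose proof (odd_over_sqrt2_gap (m - N) (N - 1) d ltac:(lia) (proj1 Hd) HdK) as Hgap.
  rewrite Hodd in Hgap.
  apply Rlt_gt, (gap_lower_bound n d hn Hd Hgap).
Qed.
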